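(* Let $\beta>2$. There is an absolute constant $C<\infty$ such that for every integer $N\ge1$, every $\theta\in[0,\pi)$ and every $K\ge1$ with $$\big|\{s\in\mathbb R: f^*_{N,\theta}(s)\ge K\}\big|\ge K^{-\beta},$$ one has $$\big|\operatorname{proj}_\theta(\mathcal G_{N\lceil K^\beta\rceil})\big|\le \frac{C}{K}.$$
   Context: For $n\ge 0$ and $\alpha\in\{-1,0,1\}^n$ let $z_\alpha=\sum_{k=1}^n 3^{-k}e^{i\pi(\frac12+\frac23\alpha_k)}$ and $\mathcal G_n=\bigcup_{\alpha\in\{-1,0,1\}^n}B(z_\alpha,3^{-n})$, $B(w,r)$ the open disc. $\operatorname{proj}_\theta(w)=\operatorname{Re}(we^{-i\theta})$. The projection multiplicity function is $f_{n,\theta}(s)=\#\{\alpha\in\{-1,0,1\}^n:\ |\operatorname{proj}_\theta(z_\alpha)-s|<3^{-n}\}$, and $f^*_{N,\theta}(s)=\max_{0\le n\le N}f_{n,\theta}(s)$. $|\cdot|$ is Lebesgue measure. *)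

From Stdlib Require Import Reals Lra Lia ZArith List.
Open Scope R_scope.

(* All sign vectors alpha in {-1,0,1}^n, as lists of length n (alpha_1 first). *)
Fixpoint alphas (n : nat) : list (list Z) :=
  match n with
  | O => nil :: nil
  | S m => flat_map (fun a => map (fun t => a :: t) (alphas m)) ((-1)%Z :: 0%Z :: 1%Z :: nil)
  end.

Definition ang (a : Z) : R := PI * (/2 + 2/3 * IZR a).

(* Real and imaginary parts of z_alpha = sum_{k=1}^n 3^{-k} e^{i ang(alpha_k)} *)
Fixpoint zre_from (k : nat) (al : list Z) : R :=
  match al with
  | nil => 0
  | a :: t => (/3) ^ k * cos (ang a) + zre_from (S k) t
  end.
Fixpoint zim_from (k : nat) (al : list Z) : R :=
  match al with
  | nil => 0
  | a :: t => (/3) ^ k * sin (ang a) + zim_from (S k) t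
  end.
Definition zre (al : list Z) : R := zre_from 1 al.
Definition zim (al : list Z) : R := zim_from 1 al.

(* proj_theta(x + i y) = Re((x+iy) e^{-i theta}) = x cos theta + y sin theta *)
Definition proj (theta x y : R) : R := x * cos theta + y * sin theta.

Definition fmult (n : nat) (theta s : R) : nat :=
  length (filter (fun al =>
    if Rlt_dec (Rabs (proj theta (zre al) (zim al) - s)) ((/3) ^ n) then true else false)
    (alphas n)).

Definition fstar (N : nat) (theta s : R) : nat :=
  fold_right Nat.max 0%nat (map (fun n => fmult n theta s) (seq 0 (S N))).

Definition inG (n : nat) (x y : R) : Prop :=
  exists al, In al (alphas n) /\
    (x - zre al) ^ 2 + (y - zim al) ^ 2 < ((/3) ^ n) ^ 2.

Definition projG (n : nat) (theta : R) (s : R) : Prop :=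
  exists x y, inG n x y /\ s = proj theta x y.

Definition ceilR (x : R) : Z := (- Int_part (- x))%Z.

(* Lebesgue (outer) measure via countable covers by open intervals. *)
Definition interval_cover (A : R -> Prop) (a b : nat -> R) : Prop :=
  (forall k, a k <= b k) /\ (forall s, A s -> exists k, a k < s < b k).

Definition measure_ge (A : R -> Prop) (m : R) : Prop :=
  forall a b L, interval_cover A a b ->
    infinite_sum (fun k => b k - a k) L -> m <= L.

Definition measure_le (A : R -> Prop) (m : R) : Prop :=
  forall eps, 0 < eps -> exists a b L, interval_cover A a b /\
    infinite_sum (fun k => b k - a k) L /\ L <= m + eps.

From Stdlib Require Import Reals Lra Lia ZArith List Bool Classical ClassicalEpsilon.
Open Scope R_scope.

(* Theorem 7, with C = 36.  Words of length n index the discs of G_n; their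
   projected centres are self-similar, point(b ++ d) = point(b) + 3^{-|b|} point(d),
   and nested.  A window (t, n) is heavy if f_{n,theta}(t) >= K; it contains
   f_{n,theta}(t) 3^{D-n} of the words of length D.
   1. Maximal inequality (heavy_windows_cover): by a finite Vitali covering, the
      doubled intervals of finitely many heavy windows have total length at most
      12/K times the proportion of words lying in one of the windows.
   2. Call a word good if a prefix of length <= N lies in a heavy window.  Applied
      to {f^*_N >= K}, step 1 gives a proportion x >= K^{1-beta}/12 of good words.
   3. Split words of length N m, m = ceil(K^beta), into m blocks.  Words with a good
      block are good, so their discs project into length <= 12/K (step 1); words
      with no good block have proportion (1 - x)^m <= 1/(m x) <= 12/K. *)

Definition scale (n : nat) : R := (/3) ^ n.

Lemma scale_pos n : 0 < scale n.
Proof. unfold scale; apply pow_lt; lra. Qed.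

Lemma scale_add a b : scale (a + b) = scale a * scale b.
Proof. apply pow_add. Qed.

Lemma scale_le_1 n : scale n <= 1.
Proof. unfold scale; rewrite <- (pow1 n); apply pow_incr; lra. Qed.

Lemma scale_antitone a b : (a <= b)%nat -> scale b <= scale a.
Proof.
  intros Hab; replace b with (a + (b - a))%nat by lia; rewrite scale_add.
  pose proof (scale_pos a); pose proof (scale_le_1 (b - a)); nra.
Qed.

Lemma pow3_scale n : 3 ^ n * scale n = 1.
Proof. unfold scale; rewrite <- Rpow_mult_distr, Rinv_r, pow1; lra. Qed.

Lemma INR_pow3 n : INR (3 ^ n) = 3 ^ n.
Proof. rewrite pow_INR; f_equal; simpl; ring. Qed.

Lemma pow3_scale_sub n D : (n <= D)%nat -> 3 ^ D * scale n = INR (3 ^ (D - n)).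
Proof.
  intros H; rewrite INR_pow3; replace D with (n + (D - n))%nat at 1 by lia.
  rewrite pow_add; transitivity ((3 ^ n * scale n) * 3 ^ (D - n)); [ring|].
  rewrite pow3_scale; ring.
Qed.

(* A ternary digit sum  sum_{j} 3^{-(k+j)} c(a_j); both coordinates of z_alpha
   are of this form, and so is their projection. *)
Fixpoint digit_sum (c : Z -> R) (k : nat) (al : list Z) : R :=
  match al with
  | nil => 0
  | a :: t => (/3) ^ k * c a + digit_sum c (S k) t
  end.

Lemma digit_sum_shift c k al : digit_sum c k al = scale k * digit_sum c 0 al.
Proof.
  revert k; induction al as [|a t IH]; intros k; simpl; [ring|].
  rewrite (IH (S k)), (IH 1%nat); unfold scale; simpl; ring.
Qed.

Lemma digit_sum_app c b d :
  digit_sum c 1 (b ++ d) = digit_sum c 1 b + scale (length b) * digit_sum c 1 d.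
Proof.
  assert (H : forall k, digit_sum c k (b ++ d) = digit_sum c k b + digit_sum c (k + length b) d).
  { induction b as [|a b IH]; intros k; simpl.
    - rewrite Nat.add_0_r; ring.
    - rewrite IH, Nat.add_succ_comm; ring. }
  rewrite H, (digit_sum_shift c (1 + length b)), (digit_sum_shift c 1 d), scale_add; ring.
Qed.

Lemma digit_sum_bound c b : (forall a, Rabs (c a) <= 1) ->
  Rabs (digit_sum c 1 b) <= (1 - scale (length b)) / 2.
Proof.
  intros Hc; induction b as [|a b IH].
  - simpl; rewrite Rabs_R0; unfold scale; simpl; lra.
  - change (a :: b) with ((a :: nil) ++ b); rewrite digit_sum_app.
    eapply Rle_trans; [apply Rabs_triang|].
    rewrite Rabs_mult, (Rabs_right (scale _)) by (left; apply scale_pos).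
    simpl; rewrite Rplus_0_r, Rabs_mult, Rabs_right by lra.
    specialize (Hc a); pose proof (scale_pos (length b)).
    unfold scale in *; simpl in *; lra.
Qed.

Definition point (th : R) (al : list Z) : R := proj th (zre al) (zim al).

Lemma proj_sq th x y : (proj th x y) ^ 2 <= x ^ 2 + y ^ 2.
Proof.
  unfold proj; pose proof (sin2_cos2 th); unfold Rsqr in H.
  pose proof (pow2_ge_0 (x * sin th - y * cos th)); nra.
Qed.

Lemma point_digit_sum th al :
  point th al = digit_sum (fun a => proj th (cos (ang a)) (sin (ang a))) 1 al.
Proof.
  unfold point, zre, zim; generalize 1%nat.
  induction al as [|a t IH]; intros k; simpl; [unfold proj; ring|].
  rewrite <- IH; unfold proj; ring.
Qed.

Lemma point_app th b d : point th (b ++ d) = point th b + scale (length b) * point th d.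
Proof. rewrite !point_digit_sum; apply digit_sum_app. Qed.

Lemma point_nested th b d :
  Rabs (point th (b ++ d) - point th b) + scale (length (b ++ d)) <= scale (length b).
Proof.
  rewrite point_app, length_app, scale_add.
  replace (point th b + scale (length b) * point th d - point th b)
    with (scale (length b) * point th d) by ring.
  rewrite Rabs_mult, Rabs_right by (left; apply scale_pos).
  assert (Hd : Rabs (point th d) <= (1 - scale (length d)) / 2).
  { rewrite point_digit_sum; apply digit_sum_bound; intros a.
    rewrite <- Rabs_R1; apply Rsqr_le_abs_0; rewrite Rsqr_1; unfold Rsqr.
    pose proof (proj_sq th (cos (ang a)) (sin (ang a))); pose proof (sin2_cos2 (ang a)).
    unfold Rsqr in *; nra. }
  pose proof (scale_pos (length b)); pose proof (scale_le_1 (length d)); nra.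
Qed.

Definition digit (x : Z) : Prop := x = (-1)%Z \/ x = 0%Z \/ x = 1%Z.

Lemma in_alphas n g : In g (alphas n) <-> length g = n /\ Forall digit g.
Proof.
  revert g; induction n as [|n IH]; intros g; simpl.
  - split.
    + intros [<-|[]]; auto.
    + intros [H _]; destruct g; [auto|discriminate].
  - rewrite !app_nil_r, !in_app_iff, !in_map_iff; split.
    + intros [[x [<- Hx]]|[[x [<- Hx]]|[x [<- Hx]]]]; apply IH in Hx as [Hl Hf];
        simpl; split; try lia; constructor; unfold digit; auto.
    + intros [Hl Hf]; destruct g as [|a g]; [discriminate|].
      inversion Hf as [|a' g' Ha Hg]; subst; simpl in Hl.
      assert (In g (alphas n)) by (apply IH; split; auto; lia).
      destruct Ha as [-> | [-> | ->]]; eauto 10.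
Qed.

Lemma alphas_length n g : In g (alphas n) -> length g = n.
Proof. now intros H; apply in_alphas in H. Qed.

Lemma alphas_firstn a b g : In g (alphas (a + b)) -> In (firstn a g) (alphas a).
Proof.
  rewrite !in_alphas; intros [Hl Hf]; split.
  - rewrite length_firstn; lia.
  - rewrite <- (firstn_skipn a g) in Hf; apply Forall_app in Hf; tauto.
Qed.

Lemma alphas_skipn a b g : In g (alphas (a + b)) -> In (skipn a g) (alphas b).
Proof.
  rewrite !in_alphas; intros [Hl Hf]; split.
  - rewrite length_skipn; lia.
  - rewrite <- (firstn_skipn a g) in Hf; apply Forall_app in Hf; tauto.
Qed.

Definition count (n : nat) (P : list Z -> bool) : nat := length (filter P (alphas n)).

Lemma count_all n : count n (fun _ => true) = (3 ^ n)%nat.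
Proof.
  unfold count; rewrite filter_true.
  induction n; simpl; auto; rewrite !app_nil_r, !length_app, !length_map; lia.
Qed.

Lemma count_le n P : (count n P <= 3 ^ n)%nat.
Proof. rewrite <- count_all; unfold count; rewrite filter_true; apply filter_length_le. Qed.

Lemma count_mono n P Q :
  (forall g, In g (alphas n) -> P g = true -> Q g = true) -> (count n P <= count n Q)%nat.
Proof.
  unfold count; induction (alphas n) as [|a l IH]; intros H; simpl; auto.
  specialize (IH (fun g Hg => H g (or_intror Hg))).
  destruct (P a) eqn:Ea; [rewrite (H a (or_introl eq_refl) Ea); simpl; lia|].
  destruct (Q a); simpl; lia.
Qed.

Lemma count_disjoint_or n P Q :
  (forall g, In g (alphas n) -> P g = true -> Q g = true -> False) ->
  count n (fun g => P g || Q g) = (count n P + count n Q)%nat.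
Proof.
  unfold count; induction (alphas n) as [|a l IH]; intros H; simpl; auto.
  specialize (IH (fun g Hg => H g (or_intror Hg))).
  destruct (P a) eqn:Ea, (Q a) eqn:Eb; simpl; try lia.
  exfalso; exact (H a (or_introl eq_refl) Ea Eb).
Qed.

Lemma count_complement n P : (count n P + count n (fun g => negb (P g)))%nat = (3 ^ n)%nat.
Proof.
  unfold count; rewrite filter_length, <- count_all; unfold count; now rewrite filter_true.
Qed.

Lemma length_filter_map {A B} (f : B -> bool) (h : A -> B) l :
  length (filter f (map h l)) = length (filter (fun x => f (h x)) l).
Proof. induction l as [|a l IH]; simpl; auto; destruct (f (h a)); simpl; auto. Qed.

Lemma count_split a b P Q :
  count (a + b) (fun g => P (firstn a g) && Q (skipn a g)) = (count a P * count b Q)%nat.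
Proof.
  unfold count; revert P; induction a as [|a IH]; intros P; simpl.
  - destruct (P nil); simpl; [now rewrite Nat.add_0_r|].
    now induction (alphas b).
  - rewrite !app_nil_r, !filter_app, !length_app, !length_filter_map; simpl.
    rewrite (IH (fun x => P ((-1)%Z :: x))), (IH (fun x => P (0%Z :: x))),
      (IH (fun x => P (1%Z :: x))); lia.
Qed.

Lemma count_pos n P g : In g (alphas n) -> P g = true -> (1 <= count n P)%nat.
Proof.
  unfold count; induction (alphas n) as [|a l IH]; simpl; [tauto|].
  intros [->|Hg] HP; [rewrite HP; simpl; lia|]; destruct (P a); simpl; [lia|auto].
Qed.

Definition rltb (x y : R) : bool := if Rlt_dec x y then true else false.

Lemma rltb_spec x y : rltb x y = true <-> x < y.
Proof. unfold rltb; destruct Rlt_dec; split; easy. Qed.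

Lemma fmult_count n th s :
  fmult n th s = count n (fun al => rltb (Rabs (point th al - s)) (scale n)).
Proof. reflexivity. Qed.

(* A window of level n centred at t: the words whose length-n prefix projects
   within 3^{-n} of t; their number among words of length n is f_{n,theta}(t). *)
Record window := Window { center : R; level : nat }.

Definition in_window (th : R) (w : window) (g : list Z) : bool :=
  rltb (Rabs (point th (firstn (level w) g) - center w)) (scale (level w)).

Definition heavy (th K : R) (w : window) : Prop := K <= INR (fmult (level w) th (center w)).

Definition near (w : window) (x : R) : Prop := Rabs (x - center w) < 2 * scale (level w).

Definition apart (w w' : window) : Prop := forall x, ~ (near w x /\ near w' x).

Lemma in_window_near th M w g s : In g (alphas M) -> (level w <= M)%nat ->
  in_window th w g = true -> Rabs (s - point th g) < scale M -> near w s.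
Proof.
  intros Hg HL Hin Hd; unfold in_window in Hin; apply rltb_spec in Hin.
  pose proof (point_nested th (firstn (level w) g) (skipn (level w) g)) as Hnest.
  rewrite firstn_skipn, length_firstn, (alphas_length _ _ Hg), Nat.min_l in Hnest by lia.
  set (P := point th (firstn (level w) g)) in *.
  unfold near; replace (s - center w) with ((s - point th g) + ((point th g - P) + (P - center w)))
    by ring.
  pose proof (Rabs_triang (s - point th g) ((point th g - P) + (P - center w))).
  pose proof (Rabs_triang (point th g - P) (P - center w)); lra.
Qed.

Lemma count_window th D w : (level w <= D)%nat ->
  count D (in_window th w) = (fmult (level w) th (center w) * 3 ^ (D - level w))%nat.
Proof.
  intros H; rewrite fmult_count, <- count_all, <- count_split.
  unfold count, in_window; replace (level w + (D - level w))%nat with D by lia.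
  f_equal; apply filter_ext; intros g; now rewrite andb_true_r.
Qed.

(* Windows with disjoint doubled intervals contain no common word: the point of
   the prefix cut at the larger of the two levels would be near both windows. *)
Lemma apart_windows_disjoint th D w w' g : In g (alphas D) ->
  (level w <= D)%nat -> (level w' <= D)%nat -> apart w w' ->
  in_window th w g = true -> in_window th w' g = true -> False.
Proof.
  assert (Hord : forall w w', (level w <= level w' <= D)%nat -> apart w w' ->
    in_window th w g = true -> in_window th w' g = true -> In g (alphas D) -> False).
  { clear w w'; intros w w' Hle Hap Hw Hw' Hg.
    set (h := firstn (level w') g).
    assert (Hh : In h (alphas (level w'))).
    { apply (alphas_firstn _ (D - level w')).
      now replace (level w' + (D - level w'))%nat with D by lia. }
    assert (Hwh : in_window th w h = true).
    { unfold in_window, h in *; now rewrite firstn_firstn, Nat.min_l by lia. }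
    unfold in_window in Hw'; apply rltb_spec in Hw'; fold h in Hw'.
    apply (Hap (point th h)); split.
    - apply (in_window_near th (level w') w h); try lia; auto.
      unfold Rminus; rewrite Rplus_opp_r, Rabs_R0; apply scale_pos.
    - unfold near; pose proof (scale_pos (level w')); lra. }
  intros Hg H H' Hap Hw Hw'.
  destruct (Nat.le_ge_cases (level w) (level w')).
  - exact (Hord w w' ltac:(lia) Hap Hw Hw' Hg).
  - apply (Hord w' w ltac:(lia)); auto; intros x [Hx Hx']; exact (Hap x (conj Hx' Hx)).
Qed.

Definition covered (th : R) (ws : list window) (g : list Z) : bool :=
  existsb (fun w => in_window th w g) ws.

Definition total_radius (ws : list window) : R :=
  fold_right (fun w acc => scale (level w) + acc) 0 ws.

Lemma covered_count th K D ws : 0 <= K -> ForallOrdPairs apart ws ->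
  Forall (fun w => (level w <= D)%nat /\ heavy th K w) ws ->
  K * 3 ^ D * total_radius ws <= INR (count D (covered th ws)).
Proof.
  intros HK Hap; induction Hap as [|w ws Hw Hws IH]; intros Hheavy; simpl.
  { rewrite Rmult_0_r; apply pos_INR. }
  inversion Hheavy as [|? ? [HD Hh] Hheavy']; subst.
  change (covered th (w :: ws)) with (fun g => in_window th w g || covered th ws g).
  rewrite count_disjoint_or.
  2: { intros g Hg Hin Hcov; apply existsb_exists in Hcov as [w' [Hw' Hin']].
       rewrite Forall_forall in Hw, Hheavy'.
       exact (apart_windows_disjoint th D w w' g Hg HD (proj1 (Hheavy' w' Hw')) (Hw w' Hw')
                Hin Hin'). }
  rewrite plus_INR, count_window, mult_INR, <- pow3_scale_sub by exact HD.
  specialize (IH Hheavy'); unfold heavy in Hh.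
  pose proof (scale_pos (level w)); pose proof (pow_lt 3 D ltac:(lra)).
  assert (K * (3 ^ D * scale (level w))
          <= INR (fmult (level w) th (center w)) * (3 ^ D * scale (level w)))
    by (apply Rmult_le_compat_r; nra).
  nra.
Qed.

Lemma min_level_exists (w : window) ws :
  exists w0, In w0 (w :: ws) /\ forall w', In w' (w :: ws) -> (level w0 <= level w')%nat.
Proof.
  revert w; induction ws as [|w1 ws IH]; intros w.
  - exists w; split; [now left|]; intros w' [<-|[]]; lia.
  - destruct (IH w1) as [w0 [Hin Hmin]].
    destruct (Nat.le_ge_cases (level w) (level w0)).
    + exists w; split; [now left|]; intros w' [<-|Hw']; [lia|]; specialize (Hmin w' Hw'); lia.
    + exists w0; split; [now right|]; intros w' [<-|Hw']; auto.
Qed.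

Definition overlapb (w w' : window) : bool :=
  rltb (Rabs (center w - center w')) (2 * scale (level w) + 2 * scale (level w')).

Lemma not_overlap_apart w w' : overlapb w w' = false -> apart w w'.
Proof.
  unfold overlapb, rltb; destruct Rlt_dec as [|Hn]; [discriminate|]; intros _ x [Hx Hx'].
  unfold near in *; pose proof (Rabs_triang (center w - x) (x - center w')).
  rewrite <- Rabs_Ropp, Ropp_minus_distr in Hx.
  replace (center w - x + (x - center w')) with (center w - center w') in H by ring; lra.
Qed.

(* Greedy
   choice: keep a window of least level (largest radius), discard the windows
   meeting it, recurse. *)
Lemma vitali (ws : list window) : exists sel, incl sel ws /\ ForallOrdPairs apart sel /\
  forall w x, In w ws -> near w x ->
    exists w', In w' sel /\ Rabs (x - center w') < 6 * scale (level w').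
Proof.
  remember (length ws) as k eqn:Hk; revert ws Hk.
  induction k as [k IH] using (well_founded_induction lt_wf); intros ws Hk.
  destruct ws as [|w1 ws1].
  { exists nil; repeat split; [intros ? []|constructor|intros ? ? []]. }
  destruct (min_level_exists w1 ws1) as [w0 [Hw0 Hmin]].
  set (rest := filter (fun w => negb (overlapb w0 w)) (w1 :: ws1)).
  assert (Hshort : (length rest < k)%nat).
  { subst k; unfold rest.
    assert (Hself : overlapb w0 w0 = true).
    { apply rltb_spec; unfold Rminus; rewrite Rplus_opp_r, Rabs_R0.
      pose proof (scale_pos (level w0)); lra. }
    assert (length (filter (fun w => negb (overlapb w0 w)) (w1 :: ws1)) <> length (w1 :: ws1)).
    { intros E; apply filter_length_forallb in E; rewrite forallb_forall in E.
      specialize (E w0 Hw0); rewrite Hself in E; discriminate. }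
    pose proof (filter_length_le (fun w => negb (overlapb w0 w)) (w1 :: ws1)); lia. }
  destruct (IH _ Hshort rest eq_refl) as [sel [Hincl [Hap Hcov]]].
  exists (w0 :: sel); split; [|split].
  - intros w [<-|Hw]; auto; apply Hincl, filter_In in Hw; tauto.
  - constructor; auto; apply Forall_forall; intros w Hw.
    apply Hincl, filter_In in Hw as [_ Hw]; apply not_overlap_apart; now destruct (overlapb w0 w).
  - intros w x Hw Hx; destruct (overlapb w0 w) eqn:E.
    + exists w0; split; [now left|].
      apply rltb_spec in E; unfold near in Hx.
      pose proof (scale_antitone _ _ (Hmin w Hw)).
      pose proof (Rabs_triang (x - center w) (center w - center w0)).
      rewrite <- Rabs_Ropp, Ropp_minus_distr in E.
      replace (x - center w + (center w - center w0)) with (x - center w0) in H0 by ring; lra.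
    + destruct (Hcov w x) as [w' [Hw' Hx']]; [apply filter_In; rewrite E; auto|auto|].
      exists w'; split; [now right|auto].
Qed.

Definition proper (ivs : list (R * R)) : Prop := Forall (fun p => fst p <= snd p) ivs.

Definition total_length (ivs : list (R * R)) : R :=
  fold_right (fun p acc => snd p - fst p + acc) 0 ivs.

Definition covers (A : R -> Prop) (ivs : list (R * R)) : Prop :=
  forall s, A s -> exists p, In p ivs /\ fst p < s < snd p.

Lemma total_length_app l1 l2 : total_length (l1 ++ l2) = total_length l1 + total_length l2.
Proof. induction l1 as [|p l1 IH]; simpl; [ring|]; rewrite IH; ring. Qed.

Lemma partial_sum_total_length (ivs : list (R * R)) n : (length ivs <= S n)%nat ->
  sum_f_R0 (fun k => snd (nth k ivs (0, 0)) - fst (nth k ivs (0, 0))) n = total_length ivs.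
Proof.
  revert n; induction ivs as [|p ivs IH]; intros n Hn.
  - induction n as [|n IHn]; simpl in *; [ring|]; rewrite IHn by lia; ring.
  - destruct n as [|n]; simpl in Hn.
    + destruct ivs; [simpl; ring|simpl in Hn; lia].
    + rewrite decomp_sum by lia; simpl; rewrite IH by lia; ring.
Qed.

(* A finite family, padded with empty intervals, is an admissible countable cover
   whose series sums to its total length. *)
Lemma finite_interval_cover A ivs : proper ivs -> covers A ivs ->
  interval_cover A (fun k => fst (nth k ivs (0, 0))) (fun k => snd (nth k ivs (0, 0))) /\
  infinite_sum (fun k => snd (nth k ivs (0, 0)) - fst (nth k ivs (0, 0))) (total_length ivs).
Proof.
  intros Hp Hc; split; [split|].
  - intros k; destruct (Nat.lt_ge_cases k (length ivs)).
    + unfold proper in Hp; rewrite Forall_forall in Hp; apply Hp, nth_In; auto.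
    + rewrite nth_overflow by auto; simpl; lra.
  - intros s Hs; destruct (Hc s Hs) as [p [Hin Hs']].
    destruct (In_nth ivs p (0, 0) Hin) as [k [_ Hk]]; exists k; now rewrite Hk.
  - intros eps Heps; exists (length ivs); intros n Hn.
    rewrite partial_sum_total_length by lia; unfold R_dist; rewrite Rminus_diag, Rabs_R0; lra.
Qed.

Lemma measure_ge_finite A m ivs : measure_ge A m -> proper ivs -> covers A ivs ->
  m <= total_length ivs.
Proof. intros Hm Hp Hc; destruct (finite_interval_cover A ivs Hp Hc); eapply Hm; eauto. Qed.

Lemma measure_le_finite A m ivs : proper ivs -> covers A ivs -> total_length ivs <= m ->
  measure_le A m.
Proof.
  intros Hp Hc Hm eps Heps; destruct (finite_interval_cover A ivs Hp Hc).
  do 3 eexists; split; [eauto|]; split; [eauto|lra].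
Qed.

Definition enlarged (w : window) : R * R :=
  (center w - 6 * scale (level w), center w + 6 * scale (level w)).

Lemma total_length_enlarged ws : total_length (map enlarged ws) = 12 * total_radius ws.
Proof. induction ws as [|w ws IH]; simpl; [ring|]; rewrite IH; unfold enlarged; simpl; ring. Qed.

Lemma heavy_windows_cover th K D ws : 0 <= K ->
  Forall (fun w => (level w <= D)%nat /\ heavy th K w) ws ->
  exists ivs, proper ivs /\
    (forall w x, In w ws -> near w x -> exists p, In p ivs /\ fst p < x < snd p) /\
    K * total_length ivs <= 12 * (INR (count D (covered th ws)) * scale D).
Proof.
  intros HK Hws; destruct (vitali ws) as [sel [Hincl [Hap Hcov]]].
  assert (Hmass : K * 3 ^ D * total_radius sel <= INR (count D (covered th sel))).
  { apply covered_count; auto; rewrite Forall_forall in *; auto. }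
  assert (Hsub : (count D (covered th sel) <= count D (covered th ws))%nat).
  { apply count_mono; intros g _ Hg; apply existsb_exists in Hg as [w [Hw Hg]].
    apply existsb_exists; eauto. }
  exists (map enlarged sel); split; [|split].
  - apply Forall_forall; intros p Hp; apply in_map_iff in Hp as [w [<- _]].
    unfold enlarged; simpl; pose proof (scale_pos (level w)); lra.
  - intros w x Hw Hx; destruct (Hcov w x Hw Hx) as [w' [Hw' Hx']].
    exists (enlarged w'); split; [now apply in_map|].
    unfold enlarged; simpl; apply Rabs_def2 in Hx'; lra.
  - apply le_INR in Hsub; pose proof (scale_pos D); rewrite total_length_enlarged.
    assert (E : K * 3 ^ D * total_radius sel * scale D = K * total_radius sel).
    { rewrite <- (Rmult_1_r (K * total_radius sel)), <- (pow3_scale D); ring. }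
    apply (Rmult_le_compat_r (scale D)) in Hmass; nra.
Qed.

(* Prefixing by a word b of length j maps the windows of level L into windows of
   level j + L (the similarity x |-> point b + 3^{-j} x), so multiplicities can
   only grow. *)
Lemma fmult_prefix th j L b t : In b (alphas j) ->
  (fmult L th t <= fmult (j + L) th (point th b + scale j * t))%nat.
Proof.
  intros Hb; pose proof (alphas_length _ _ Hb) as Hlen.
  set (is_b := fun a : list Z => if list_eq_dec Z.eq_dec a b then true else false).
  set (near_t := fun al => rltb (Rabs (point th al - t)) (scale L)).
  assert (Hone : (1 <= count j is_b)%nat).
  { apply (count_pos _ _ b Hb); unfold is_b; now destruct list_eq_dec. }
  assert (Hmap : (count (j + L) (fun g => is_b (firstn j g) && near_t (skipn j g))
                  <= fmult (j + L) th (point th b + scale j * t))%nat).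
  { rewrite fmult_count; apply count_mono; intros g _ Hg.
    apply andb_prop in Hg as [Hpre Hg]; unfold is_b in Hpre.
    destruct list_eq_dec as [Eb|]; [|discriminate].
    unfold near_t in Hg; apply rltb_spec in Hg; apply rltb_spec.
    rewrite <- (firstn_skipn j g), Eb, point_app, Hlen, scale_add.
    replace (point th b + scale j * point th (skipn j g) - (point th b + scale j * t))
      with (scale j * (point th (skipn j g) - t)) by ring.
    rewrite Rabs_mult, Rabs_right by (left; apply scale_pos).
    apply Rmult_lt_compat_l; [apply scale_pos|auto]. }
  rewrite count_split in Hmap; rewrite fmult_count; fold near_t; nia.
Qed.

Definition good (th K : R) (D : nat) (g : list Z) : Prop :=
  exists w, (level w <= D)%nat /\ heavy th K w /\ in_window th w g = true.

Definition goodb (th K : R) (D : nat) (g : list Z) : bool :=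
  if excluded_middle_informative (good th K D g) then true else false.

Lemma goodb_spec th K D g : goodb th K D g = true <-> good th K D g.
Proof. unfold goodb; destruct excluded_middle_informative; split; easy. Qed.

Lemma good_prefix th K j D b g : In b (alphas j) -> good th K D g -> good th K (j + D) (b ++ g).
Proof.
  intros Hb [w [HD [Hheavy Hin]]]; pose proof (alphas_length _ _ Hb) as Hlen.
  exists (Window (point th b + scale j * center w) (j + level w)); simpl; split; [lia|split].
  - unfold heavy in *; simpl; eapply Rle_trans; [exact Hheavy|].
    apply le_INR, fmult_prefix, Hb.
  - unfold in_window in *; simpl; apply rltb_spec in Hin; apply rltb_spec.
    rewrite <- Hlen at 1; rewrite firstn_app_2, point_app, Hlen, scale_add.
    replace (point th b + scale j * point th (firstn (level w) g)
             - (point th b + scale j * center w))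
      with (scale j * (point th (firstn (level w) g) - center w)) by ring.
    rewrite Rabs_mult, Rabs_right by (left; apply scale_pos).
    apply Rmult_lt_compat_l; [apply scale_pos|auto].
Qed.

Fixpoint no_good_block (th K : R) (N m : nat) (g : list Z) : bool :=
  match m with
  | O => true
  | S m' => negb (goodb th K N (firstn N g)) && no_good_block th K N m' (skipn N g)
  end.

(* The blocks are independent, so the proportion of such words is the m-th power
   of the proportion of non-good words of length N. *)
Lemma count_no_good_block th K N m :
  count (N * m) (no_good_block th K N m) = (count N (fun d => negb (goodb th K N d)) ^ m)%nat.
Proof.
  induction m as [|m IH]; [rewrite Nat.mul_0_r; reflexivity|].
  replace (N * S m)%nat with (N + N * m)%nat by lia.
  change (no_good_block th K N (S m)) with (fun g =>
    (fun d => negb (goodb th K N d)) (firstn N g) && no_good_block th K N m (skipn N g)).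
  rewrite count_split, IH; reflexivity.
Qed.

(* A word with a good block is good: prefixing the block preserves goodness. *)
Lemma good_block_good th K N m g : In g (alphas (N * m)) ->
  no_good_block th K N m g = false -> good th K (N * m) g.
Proof.
  revert g; induction m as [|m IH]; intros g Hg Hblock; [discriminate|].
  replace (N * S m)%nat with (N + N * m)%nat in * by lia; simpl in Hblock.
  apply andb_false_iff in Hblock as [Hfirst|Hrest].
  - apply negb_false_iff, goodb_spec in Hfirst as [w [HD [Hheavy Hin]]].
    exists w; split; [lia|split; auto].
    unfold in_window in *; now rewrite firstn_firstn, Nat.min_l in Hin by exact HD.
  - rewrite <- (firstn_skipn N g); apply good_prefix.
    + exact (alphas_firstn _ _ _ Hg).
    + exact (IH _ (alphas_skipn _ _ _ Hg) Hrest).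
Qed.

Lemma finite_choice {A B : Type} (l : list A) (Q : A -> B -> Prop) :
  exists ys, (forall y, In y ys -> exists x, In x l /\ Q x y) /\
    forall x, In x l -> (exists y, Q x y) -> exists y, In y ys /\ Q x y.
Proof.
  induction l as [|a l [ys [Hys Hl]]].
  - exists nil; split; [intros _ []|intros _ []].
  - destruct (classic (exists y, Q a y)) as [[y Hy]|Hnone].
    + exists (y :: ys); split.
      * intros y' [<-|Hy']; [exists a; simpl; auto|].
        destruct (Hys y' Hy') as [x [? ?]]; exists x; simpl; auto.
      * intros x [<-|Hx] Hex; [exists y; simpl; auto|].
        destruct (Hl x Hx Hex) as [y' [? ?]]; exists y'; simpl; auto.
    + exists ys; split.
      * intros y' Hy'; destruct (Hys y' Hy') as [x [? ?]]; exists x; simpl; auto.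
      * intros x [<-|Hx] Hex; [contradiction|auto].
Qed.

Lemma fold_max_reached (l : list nat) :
  fold_right Nat.max 0%nat l = 0%nat \/ In (fold_right Nat.max 0%nat l) l.
Proof.
  induction l as [|a l IH]; simpl; auto; right.
  destruct (Nat.max_spec a (fold_right Nat.max 0%nat l)) as [[Hlt ->]|[_ ->]]; auto.
  destruct IH as [E|]; [rewrite E in Hlt; lia|auto].
Qed.

Lemma fstar_attained N th s K : 0 < K -> K <= INR (fstar N th s) ->
  exists n, (n <= N)%nat /\ K <= INR (fmult n th s).
Proof.
  unfold fstar; intros HK Hs.
  destruct (fold_max_reached (map (fun n => fmult n th s) (seq 0 (S N)))) as [E|E].
  - rewrite E in Hs; simpl in Hs; lra.
  - apply in_map_iff in E as [n [En Hn]]; apply in_seq in Hn.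
    exists n; split; [lia|now rewrite En].
Qed.

Lemma fmult_witness n th s : (1 <= fmult n th s)%nat ->
  exists al, In al (alphas n) /\ Rabs (point th al - s) < scale n.
Proof.
  rewrite fmult_count; unfold count; intros H.
  destruct (filter _ (alphas n)) as [|al l] eqn:E; [simpl in H; lia|].
  assert (Hal : In al (filter (fun al => rltb (Rabs (point th al - s)) (scale n)) (alphas n)))
    by (rewrite E; now left).
  apply filter_In in Hal as [Hal Hs]; apply rltb_spec in Hs; eauto.
Qed.

(* A point of proj_theta(G_M) lies within 3^{-M} of some projected centre, since
   projection does not increase distances. *)
Lemma projG_near M th s : projG M th s ->
  exists g, In g (alphas M) /\ Rabs (s - point th g) < scale M.
Proof.
  intros [x [y [[al [Hal Hd]] ->]]]; exists al; split; auto.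
  replace (proj th x y - point th al) with (proj th (x - zre al) (y - zim al))
    by (unfold point, proj; ring).
  pose proof (proj_sq th (x - zre al) (y - zim al)); pose proof (scale_pos M).
  fold (scale M) in Hd; apply Rabs_def1; nra.
Qed.

Definition good_fraction (th K : R) (N : nat) : R := INR (count N (goodb th K N)) * scale N.

Lemma good_fraction_bounds th K N : 0 <= good_fraction th K N <= 1.
Proof.
  unfold good_fraction; pose proof (scale_pos N); pose proof (pow3_scale N).
  pose proof (le_INR _ _ (count_le N (goodb th K N))); rewrite INR_pow3 in *.
  split; [apply Rmult_le_pos; [apply pos_INR|lra]|nra].
Qed.

Lemma bad_fraction th K N :
  INR (count N (fun d => negb (goodb th K N d))) * scale N = 1 - good_fraction th K N.
Proof.
  unfold good_fraction; rewrite <- (pow3_scale N), <- INR_pow3.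
  rewrite <- (count_complement N (goodb th K N)).
  rewrite plus_INR; ring.
Qed.

(* Each point of the
   set lies within 3^{-n} of a heavy window of level n <= N at a projected centre
   of generation n; the maximal inequality bounds the measure of their union. *)
Lemma good_fraction_large N th K m0 : 1 <= K ->
  measure_ge (fun s => K <= INR (fstar N th s)) m0 ->
  m0 * K <= 12 * good_fraction th K N.
Proof.
  intros HK Hm.
  set (nodes := flat_map (fun n => map (pair n) (alphas n)) (seq 0 (S N))).
  set (Q := fun (x : nat * list Z) w =>
    level w = fst x /\ Rabs (point th (snd x) - center w) < scale (fst x) /\ heavy th K w).
  destruct (finite_choice nodes Q) as [ws [Hws Hnodes]].
  assert (Hlevels : Forall (fun w => (level w <= N)%nat /\ heavy th K w) ws).
  { apply Forall_forall; intros w Hw; destruct (Hws w Hw) as [[n al] [Hx [Hn [_ Hh]]]].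
    apply in_flat_map in Hx as [n' [Hn' Hx]]; apply in_map_iff in Hx as [? [E _]].
    injection E as <- _; apply in_seq in Hn'; simpl in Hn; split; [lia|auto]. }
  destruct (heavy_windows_cover th K N ws ltac:(lra) Hlevels) as [ivs [Hp [Hcov Hlen]]].
  assert (Hm0 : m0 <= total_length ivs).
  { apply (measure_ge_finite _ _ _ Hm Hp); intros s Hs.
    destruct (fstar_attained N th s K ltac:(lra) Hs) as [n [Hn Hf]].
    destruct (fmult_witness n th s ltac:(apply INR_le; simpl; lra)) as [al [Hal Hd]].
    destruct (Hnodes (n, al)) as [w [Hw [Hlev [Hc _]]]].
    { apply in_flat_map; exists n; split; [apply in_seq; lia|now apply in_map]. }
    { exists (Window s n); repeat split; auto. }
    apply (Hcov w s Hw); unfold near; simpl in *; rewrite Hlev.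
    apply Rabs_def2 in Hd; apply Rabs_def2 in Hc; apply Rabs_def1; lra. }
  assert (Hsub : (count N (covered th ws) <= count N (goodb th K N))%nat).
  { apply count_mono; intros g _ Hg; apply existsb_exists in Hg as [w [Hw Hin]].
    apply goodb_spec; exists w; rewrite Forall_forall in Hlevels.
    destruct (Hlevels w Hw); auto. }
  apply le_INR in Hsub; pose proof (scale_pos N); unfold good_fraction; nra.
Qed.

Lemma no_good_block_fraction th K N m :
  INR (count (N * m) (no_good_block th K N m)) * scale (N * m) = (1 - good_fraction th K N) ^ m.
Proof.
  rewrite <- bad_fraction; unfold scale.
  rewrite count_no_good_block, pow_INR, pow_mult, Rpow_mult_distr; reflexivity.
Qed.

Definition centred_intervals (th r : R) (gs : list (list Z)) : list (R * R) :=
  map (fun g => (point th g - r, point th g + r)) gs.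

Lemma total_length_centred th r gs :
  total_length (centred_intervals th r gs) = 2 * (INR (length gs) * r).
Proof.
  induction gs as [|g gs IH]; simpl length; [simpl; ring|].
  rewrite S_INR; simpl; fold (centred_intervals th r gs); rewrite IH; ring.
Qed.

(* Step 3 (covering G_{Nm}): every disc of generation Nm either belongs to a word
   with a good block, hence projects into the doubled interval of a heavy window
   (total length <= 12/K by the maximal inequality), or to one of the words with no
   good block, whose proportion is (1 - x)^m. *)
Lemma projG_cover_bound N m th K : 1 <= K ->
  measure_le (projG (N * m) th) (12 / K + 2 * (1 - good_fraction th K N) ^ m).
Proof.
  intros HK; set (M := (N * m)%nat).
  set (Q := fun g w => (level w <= M)%nat /\ heavy th K w /\ in_window th w g = true).
  destruct (finite_choice (alphas M) Q) as [ws [Hws Hwords]].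
  assert (Hlevels : Forall (fun w => (level w <= M)%nat /\ heavy th K w) ws).
  { apply Forall_forall; intros w Hw; destruct (Hws w Hw) as [g [_ [? [? _]]]]; auto. }
  destruct (heavy_windows_cover th K M ws ltac:(lra) Hlevels) as [ivs [Hp [Hcov Hlen]]].
  set (bad := filter (no_good_block th K N m) (alphas M)).
  apply (measure_le_finite _ _ (ivs ++ centred_intervals th (scale M) bad)).
  - apply Forall_app; split; auto; apply Forall_forall; intros p Hp'.
    apply in_map_iff in Hp' as [g [<- _]]; simpl; pose proof (scale_pos M); lra.
  - intros s Hs; destruct (projG_near M th s Hs) as [g [Hg Hd]].
    destruct (no_good_block th K N m g) eqn:Eb.
    + exists (point th g - scale M, point th g + scale M); split.
      * apply in_or_app; right; apply in_map_iff; exists g; split; [reflexivity|].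
        apply filter_In; auto.
      * simpl; apply Rabs_def2 in Hd; lra.
    + destruct (Hwords g Hg (good_block_good th K N m g Hg Eb)) as [w [Hw [HL [_ Hin]]]].
      destruct (Hcov w s Hw (in_window_near th M w g s Hg HL Hin Hd)) as [p [Hp' Hsp]].
      exists p; split; [apply in_or_app|]; auto.
  - rewrite total_length_app, total_length_centred.
    change (INR (length bad) * scale M)
      with (INR (count (N * m) (no_good_block th K N m)) * scale (N * m)).
    rewrite no_good_block_fraction.
    assert (Hivs : total_length ivs <= 12 / K).
    { pose proof (le_INR _ _ (count_le M (covered th ws))); rewrite INR_pow3 in *.
      pose proof (pow3_scale M); pose proof (scale_pos M).
      apply (Rmult_le_reg_l K); [lra|]; unfold Rdiv; rewrite <- Rmult_assoc,
        (Rmult_comm K 12), Rmult_assoc, Rinv_r, Rmult_1_r by lra; nra. }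
    lra.
Qed.

Lemma measure_le_mono A m1 m2 : measure_le A m1 -> m1 <= m2 -> measure_le A m2.
Proof.
  intros H Hm eps Heps; destruct (H eps Heps) as [a [b [L [? [? ?]]]]].
  exists a, b, L; split; [auto|split; [auto|lra]].
Qed.

Lemma ceil_ge x : 0 < x -> x <= INR (Z.to_nat (ceilR x)).
Proof.
  intros Hx; unfold ceilR; destruct (base_Int_part (- x)) as [H1 H2].
  assert (Hz : (0 <= - Int_part (- x))%Z).
  { assert (IZR (Int_part (- x)) < 0) by lra; apply lt_IZR in H; lia. }
  rewrite INR_IZR_INZ, Z2Nat.id, opp_IZR by exact Hz; lra.
Qed.

Lemma bernoulli x m : 0 <= x <= 1 -> (1 - x) ^ m * (1 + INR m * x) <= 1.
Proof.
  intros Hx; induction m as [|m IH]; [simpl; lra|].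
  rewrite S_INR; simpl pow; pose proof (pow_le (1 - x) m ltac:(lra)); pose proof (pos_INR m).
  assert ((1 - x) * (1 + (INR m + 1) * x) <= 1 + INR m * x) by nra; nra.
Qed.

(* Consequently (1 - x)^m <= 1/(1 + m x) <= 12/K as soon as m x >= K/12. *)
Lemma power_decay x m K : 0 <= x <= 1 -> 0 < K -> K <= 12 * (INR m * x) ->
  (1 - x) ^ m <= 12 / K.
Proof.
  intros Hx HK Hmx; pose proof (bernoulli x m Hx); pose proof (pow_le (1 - x) m ltac:(lra)).
  apply (Rmult_le_reg_r (K / 12)); [lra|].
  replace (12 / K * (K / 12)) with 1 by (field; lra); nra.
Qed.

Theorem theorem7 (beta : R) (hbeta : 2 < beta) :
  exists C : R, forall (N : nat) (theta K : R),
    (1 <= N)%nat -> 0 <= theta < PI -> 1 <= K ->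
    measure_ge (fun s => K <= INR (fstar N theta s)) (Rpower K (- beta)) ->
    measure_le (projG (N * Z.to_nat (ceilR (Rpower K beta))) theta) (C / K).
Proof.
  exists 36; intros N th K _ _ HK Hmeas.
  set (m := Z.to_nat (ceilR (Rpower K beta))).
  set (x := good_fraction th K N).
  pose proof (good_fraction_bounds th K N) as Hx.
  pose proof (good_fraction_large N th K _ HK Hmeas) as Hdense; fold x in Hdense.
  assert (Hm : Rpower K beta <= INR m) by (apply ceil_ge; unfold Rpower; apply exp_pos).
  assert (Hinv : Rpower K beta * Rpower K (- beta) = 1).
  { rewrite <- Rpower_plus, Rplus_opp_r; apply Rpower_O; lra. }
  assert (Hmx : K <= 12 * (INR m * x)).
  { assert (0 < Rpower K (- beta)) by (unfold Rpower; apply exp_pos).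
    assert (0 < Rpower K beta) by (unfold Rpower; apply exp_pos).
    replace K with (Rpower K beta * (Rpower K (- beta) * K)) at 1
      by (rewrite <- Rmult_assoc, Hinv; ring).
    assert (Rpower K beta * (Rpower K (- beta) * K) <= INR m * (12 * x))
      by (apply Rmult_le_compat; nra).
    lra. }
  pose proof (power_decay x m K Hx ltac:(lra) Hmx) as Hdecay.
  eapply measure_le_mono; [apply (projG_cover_bound N m th K HK)|].
  fold x; replace (36 / K) with (12 / K + 2 * (12 / K)) by (field; lra); lra.
Qed.
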